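(* For every type $A$: (CR1) $[\![A]\!]\subseteq \mathrm{SN}$; (CR2) if $t\in[\![A]\!]$ and $t\to_{\mathsf{dist}} s$, then $s\in[\![A]\!]$; (CR3) if $t$ is neutral and $\mathrm{Red}(t)\subseteq[\![A]\!]$, then $t\in[\![A]\!]$.
   Context: Terms: $t,s,u ::= x \mid \lambda x.t \mid ts \mid \langle t,s\rangle \mid \pi_1 t \mid \pi_2 t$ (up to $\alpha$-renaming). Top-level rules: $(\lambda x.t)s \mapsto t\{x:=s\}$; $\pi_i\langle t_1,t_2\rangle \mapsto t_i$ ($i=1,2$); $\langle t,s\rangle u \mapsto \langle tu, su\rangle$; $\pi_i(\lambda x.t)\mapsto \lambda x.\pi_i t$ ($i=1,2$); $\to_{\mathsf{dist}}$ is the closure of these rules under all term constructors. $\mathrm{SN}$ is the set of strongly normalizing terms for $\to_{\mathsf{dist}}$; $\mathrm{Red}(t)=\{s\mid t\to_{\mathsf{dist}} s\}$. A term is neutral if it is a variable, an application $ts$, or a projection $\pi_i t$. Types: $A ::= \tau \mid A\Rightarrow A \mid A\wedge A$. Interpretation: $[\![\tau]\!]=\mathrm{SN}$; $[\![A\Rightarrow B]\!]=\{t\mid \forall s\in[\![A]\!],\ ts\in[\![B]\!]\}$; $[\![A\wedge B]\!]=\{t\mid \pi_1t\in[\![A]\!]\text{ and }\pi_2 t\in[\![B]\!]\}$. *)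

(* Lambda terms with pairs, de Bruijn indices (terms up to alpha). *)
From Stdlib Require Import Arith.

Inductive index : Type := One | Two.

Inductive term : Type :=
| Var  : nat -> term
| Lam  : term -> term
| App  : term -> term -> term
| Pair : term -> term -> term
| Proj : index -> term -> term.

Fixpoint lift (k c : nat) (t : term) : term :=
  match t with
  | Var n => if Nat.ltb n c then Var n else Var (n + k)
  | Lam t => Lam (lift k (S c) t)
  | App t s => App (lift k c t) (lift k c s)
  | Pair t s => Pair (lift k c t) (lift k c s)
  | Proj i t => Proj i (lift k c t)
  end.

Fixpoint subst (c : nat) (u : term) (t : term) : term :=
  match t with
  | Var n =>
      match Nat.compare n c with
      | Lt => Var n
      | Eq => lift c 0 u
      | Gt => Var (pred n)
      end
  | Lam t => Lam (subst (S c) u t)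
  | App t s => App (subst c u t) (subst c u s)
  | Pair t s => Pair (subst c u t) (subst c u s)
  | Proj i t => Proj i (subst c u t)
  end.

Definition subst0 (t s : term) : term := subst 0 s t.

Definition proj_pair (i : index) (t1 t2 : term) : term :=
  match i with One => t1 | Two => t2 end.

Inductive top_step : term -> term -> Prop :=
| ts_beta : forall t s, top_step (App (Lam t) s) (subst0 t s)
| ts_proj : forall i t1 t2, top_step (Proj i (Pair t1 t2)) (proj_pair i t1 t2)
| ts_pairapp : forall t s u, top_step (App (Pair t s) u) (Pair (App t u) (App s u))
| ts_projlam : forall i t, top_step (Proj i (Lam t)) (Lam (Proj i t)).

Inductive step : term -> term -> Prop :=
| st_top : forall t s, top_step t s -> step t s
| st_lam : forall t t', step t t' -> step (Lam t) (Lam t')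
| st_appl : forall t t' s, step t t' -> step (App t s) (App t' s)
| st_appr : forall t s s', step s s' -> step (App t s) (App t s')
| st_pairl : forall t t' s, step t t' -> step (Pair t s) (Pair t' s)
| st_pairr : forall t s s', step s s' -> step (Pair t s) (Pair t s')
| st_proj : forall i t t', step t t' -> step (Proj i t) (Proj i t').

Inductive SN : term -> Prop :=
| SN_intro : forall t, (forall s, step t s -> SN s) -> SN t.

Definition Red (t : term) : term -> Prop := fun s => step t s.

Definition neutral (t : term) : Prop :=
  match t with
  | Var _ | App _ _ | Proj _ _ => True
  | _ => False
  end.

Inductive type : Type :=
| Base : type
| Arrow : type -> type -> type
| And : type -> type -> type.

Fixpoint interp (A : type) : term -> Prop :=
  match A with
  | Base => SN
  | Arrow A B => fun t => forall s, interp A s -> interp B (App t s)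
  | And A B => fun t => interp A (Proj One t) /\ interp B (Proj Two t)
  end.

(** Tait–Girard reducibility: the three properties CR1–CR3 define "reducibility
    candidates", [SN] is one, and candidates are closed under the arrow and
    product constructions, so every [interp A] is a candidate by induction on [A].
    The only rule-specific fact is that a neutral term in head position creates no
    top-level redex: each of the four rules needs a [Lam] or a [Pair] there. *)

Record candidate (P : term -> Prop) : Prop := {
  cand_SN : forall t, P t -> SN t;
  cand_step : forall t s, P t -> step t s -> P s;
  cand_neutral : forall t, neutral t -> (forall s, Red t s -> P s) -> P t
}.

Lemma SN_step : forall t s, SN t -> step t s -> SN s.
Proof. intros t s [t' Ht]; exact (Ht s). Qed.

Lemma SN_App_l : forall t s, SN (App t s) -> SN t.
Proof.
  intros t s H; remember (App t s) as u eqn:Hu; revert t s Hu.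
  induction H as [u _ IH]; intros t s ->.
  constructor; intros t' Ht'.
  exact (IH (App t' s) (st_appl t t' s Ht') t' s eq_refl).
Qed.

Lemma SN_Proj : forall i t, SN (Proj i t) -> SN t.
Proof.
  intros i t H; remember (Proj i t) as u eqn:Hu; revert i t Hu.
  induction H as [u _ IH]; intros i t ->.
  constructor; intros t' Ht'.
  exact (IH (Proj i t') (st_proj i t t' Ht') i t' eq_refl).
Qed.

Lemma Var_normal : forall n s, ~ step (Var n) s.
Proof. intros n s H; inversion H as [? ? Htop| | | | | |]; inversion Htop. Qed.

Lemma step_App_neutral : forall t u r, neutral t -> step (App t u) r ->
  (exists t', step t t' /\ r = App t' u) \/ (exists u', step u u' /\ r = App t u').
Proof.
  intros t u r Hn H; inversion H as [? ? Htop| |t0 t' s0 Ht| t0 s0 u' Hu| | |]; subst.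
  - inversion Htop; subst; contradiction.
  - left; exists t'; split; [exact Ht | reflexivity].
  - right; exists u'; split; [exact Hu | reflexivity].
Qed.

Lemma step_Proj_neutral : forall i t r, neutral t -> step (Proj i t) r ->
  exists t', step t t' /\ r = Proj i t'.
Proof.
  intros i t r Hn H; inversion H as [? ? Htop| | | | | |i0 t0 t' Ht]; subst.
  - inversion Htop; subst; contradiction.
  - exists t'; split; [exact Ht | reflexivity].
Qed.

Lemma candidate_SN : candidate SN.
Proof.
  split.
  - trivial.
  - exact SN_step.
  - intros t _ Hred; constructor; exact Hred.
Qed.

Lemma candidate_Var : forall P n, candidate P -> P (Var n).
Proof.
  intros P n HP; apply (cand_neutral P HP); [exact I |].
  intros s Hs; destruct (Var_normal n s Hs).
Qed.

Lemma candidate_conj : forall P Q, candidate P -> candidate Q ->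
  candidate (fun t => P t /\ Q t).
Proof.
  intros P Q HP HQ; split.
  - intros t [Ht _]; exact (cand_SN P HP t Ht).
  - intros t s [HPt HQt] Hst;
      split; [exact (cand_step P HP t s HPt Hst) | exact (cand_step Q HQ t s HQt Hst)].
  - intros t Hn Hred; split.
    + apply (cand_neutral P HP t Hn); intros s Hs; apply (Hred s Hs).
    + apply (cand_neutral Q HQ t Hn); intros s Hs; apply (Hred s Hs).
Qed.

Lemma candidate_Proj : forall P i, candidate P -> candidate (fun t => P (Proj i t)).
Proof.
  intros P i HP; split.
  - intros t Ht; exact (SN_Proj i t (cand_SN P HP _ Ht)).
  - intros t s Ht Hst; exact (cand_step P HP _ _ Ht (st_proj i t s Hst)).
  - intros t Hn Hred; apply (cand_neutral P HP); [exact I |].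
    intros r Hr; destruct (step_Proj_neutral i t r Hn Hr) as [t' [Ht' ->]].
    exact (Hred t' Ht').
Qed.

Lemma candidate_arrow : forall P Q, candidate P -> candidate Q ->
  candidate (fun t => forall s, P s -> Q (App t s)).
Proof.
  intros P Q HP HQ; split.
  - intros t Ht.
    exact (SN_App_l t (Var 0) (cand_SN Q HQ _ (Ht _ (candidate_Var P 0 HP)))).
  - intros t t' Ht Htt' s Hs; exact (cand_step Q HQ _ _ (Ht s Hs) (st_appl t t' s Htt')).
  - intros t Hn Hred s Hs.
    induction (cand_SN P HP s Hs) as [s _ IH].
    apply (cand_neutral Q HQ); [exact I |].
    intros r Hr; destruct (step_App_neutral t s r Hn Hr) as [[t' [Ht' ->]] | [s' [Hs' ->]]].
    + exact (Hred t' Ht' s Hs).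
    + exact (IH s' Hs' (cand_step P HP s s' Hs Hs')).
Qed.

Lemma candidate_interp : forall A, candidate (interp A).
Proof.
  induction A as [| A HA B HB | A HA B HB].
  - exact candidate_SN.
  - exact (candidate_arrow _ _ HA HB).
  - exact (candidate_conj _ _ (candidate_Proj _ One HA) (candidate_Proj _ Two HB)).
Qed.

Theorem lemma5 : forall A : type,
  (forall t, interp A t -> SN t) /\
  (forall t s, interp A t -> step t s -> interp A s) /\
  (forall t, neutral t -> (forall s, Red t s -> interp A s) -> interp A t).
Proof.
  intros A; destruct (candidate_interp A) as [CR1 CR2 CR3].
  exact (conj CR1 (conj CR2 CR3)).
Qed.
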